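(* Let $X$ be a topological space, $Y$ a metric space, $\alpha\ge 1$ a countable ordinal, and $f:X\to Y$ a Baire-$\alpha$ function. Then there exists a sequence $(G_n)_{n=1}^{\infty}$ of $\Sigma_\alpha$ subsets of $X\times Y$ such that $\bigcap_{n=1}^{\infty}G_n=gr(f)$ and $diam(G_n(x))\to 0$ as $n\to\infty$ for each $x\in X$. Furthermore, if $Y$ is a Fréchet space (with its translation invariant metric), the sets $G_n$ can be chosen to be $\Sigma_\alpha$-strips.
   Context: Borel classes in a topological space: a set is in $\Sigma_1$ iff it is open; for a countable ordinal $\alpha\ge1$, a set is in $\Pi_\alpha$ iff its complement is in $\Sigma_\alpha$; for $\alpha>1$, a set is in $\Sigma_\alpha$ iff it is a countable union $\bigcup_i A_i$ with each $A_i\in\Pi_{\alpha_i}$ for some $\alpha_i<\alpha$. Baire classes: Baire-0 functions are the continuous ones; for $\alpha\ge1$, a function is Baire-$\alpha$ if it is the pointwise limit of a sequence of functions $f_n$, each Baire-$\alpha_n$ with $\alpha_n<\alpha$. $gr(f)=\{(x,f(x)):x\in X\}$. For $G\subseteq X\times Y$ and $x\in X$, $G(x)=\{y\in Y:(x,y)\in G\}$; diameters are with respect to the metric of $Y$. A Fréchet space is a locally convex topological vector space that is complete with respect to a translation invariant metric. If $Y$ is a Fréchet space, a $\Sigma_\alpha$-strip is a $\Sigma_\alpha$ set $S\subseteq X\times Y$ such that $S(x)$ is convex for every $x\in X$. *)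

From HB Require Import structures.
From mathcomp Require Import all_boot all_order all_algebra.
From mathcomp Require Import all_classical all_reals all_analysis.

Set Implicit Arguments.
Unset Strict Implicit.
Unset Printing Implicit Defensive.

Import Order.TTheory GRing.Theory Num.Theory.
Local Open Scope classical_set_scope.
Local Open Scope ring_scope.

(* Countable ordinals, represented as Brouwer trees.                   *)
(* |OZ| = 0, |OS a| = |a|+1, |OL f| = sup_n |f n|.  Every countable     *)
(* ordinal is denoted by some tree and every tree denotes a countable   *)
(* ordinal.                                                              *)
Inductive cord : Type :=
| OZ : cord
| OS : cord -> cord
| OL : (nat -> cord) -> cord.

Inductive ole : cord -> cord -> Prop :=
| oleZ b : ole OZ b
| oleS a b : olt a b -> ole (OS a) b
| oleL f b : (forall n, ole (f n) b) -> ole (OL f) b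
with olt : cord -> cord -> Prop :=
| oltS a b : ole a b -> olt a (OS b)
| oltL a g n : olt a (g n) -> olt a (OL g).

Definition oone : cord := OS OZ.

Inductive Sigma_class (T : topologicalType) : cord -> set T -> Prop :=
| Sigma_open a (A : set T) :
    ole a oone -> ole oone a -> open A -> Sigma_class a A
| Sigma_union a (A : nat -> set T) (b : nat -> cord) :
    (forall i, ole oone (b i) /\ olt (b i) a) ->
    (forall i, Sigma_class (b i) (~` A i)) ->
    Sigma_class a (\bigcup_i A i).

Definition Pi_class (T : topologicalType) (a : cord) (A : set T) :=
  Sigma_class a (~` A).

Inductive Baire_class (X Y : topologicalType) : cord -> (X -> Y) -> Prop :=
| Baire_cont a (f : X -> Y) : ole a OZ -> continuous f -> Baire_class a f
| Baire_lim a (f : X -> Y) (g : nat -> X -> Y) (b : nat -> cord) :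
    (forall n, olt (b n) a) ->
    (forall n, Baire_class (b n) (g n)) ->
    (forall x, (fun n => g n x) @ \oo --> f x) ->
    Baire_class a f.

Definition graph_of (X Y : Type) (f : X -> Y) : set (X * Y) :=
  [set p | p.2 = f p.1].

Definition section_at (X Y : Type) (G : set (X * Y)) (x : X) : set Y :=
  [set y | G (x, y)].

(* diameter of a subset w.r.t. a distance function d, as an extended
   real (sup of the distances; ereal_sup of the empty set is -oo, but the
   sets to which it is applied below are nonempty). *)
Definition diam (R : realType) (Y : Type) (d : Y -> Y -> R) (S : set Y) : \bar R :=
  ereal_sup [set (d a b)%:E | a in S & b in S].

(* Fréchet spaces: a locally convex topological vector space Y         *)
(* (tvsType R is locally convex in MathComp-Analysis) together with a  *)
(* metric d which is translation invariant, induces the topology of Y, *)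
(* and is complete.                                                     *)
Definition frechet_metric (R : realType) (Y : tvsType R) (d : Y -> Y -> R) : Prop :=
  (forall x y, 0 <= d x y) /\
  (forall x y, d x y = 0 <-> x = y) /\
  (forall x y, d x y = d y x) /\
  (forall x y z, d x z <= d x y + d y z) /\
  (forall x y z, d (x + z) (y + z) = d x y) /\
  (forall (y : Y) (A : set Y),
      nbhs y A <-> exists2 e : R, 0 < e & [set z | d y z < e] `<=` A) /\
      (forall u : nat -> Y,
          (forall e : R, 0 < e -> exists N, forall m n, (N <= m)%N -> (N <= n)%N ->
             d (u m) (u n) < e) ->
          exists l : Y, u @ \oo --> l).

Definition Sigma_strip (R : realType) (X : topologicalType)
    (Y : tvsType R) (a : cord) (S : set (X * Y)) : Prop :=
  Sigma_class a S /\ forall x : X, convex_set (section_at S x).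

(* Write f as the pointwise limit of functions g_n of classes below alpha.  The
   key fact is that for Baire functions H_1, ..., H_N of classes below alpha, a
   continuous Phi and an open set O, the set of (x, w) with
   Phi (H_1 x, ..., H_N x, w) in O is Sigma_alpha.  This goes by induction on
   alpha: writing each H_i as a limit of functions of lower classes, a limit
   point lies in O iff the tail of the sequence stays in one of the closed sets
   {t | ball (t, 1/(k+1)) is contained in O}.  In a metric space this makes
   G_j = U_n {(x, y) | d (g_(j+n) x, y) < 1/(j+1)} a Sigma_alpha set.  In a
   Frechet space the ball becomes an open convex neighbourhood V_j of 0, and
   g_(j+n) x a convex combination of g_j x, g_(j+1) x, ... with rational
   weights: the sections of G_j are then convex, while G_j stays a countable
   union. *)

From mathcomp Require Import all_boot all_order all_algebra.
From mathcomp Require Import all_classical all_reals all_analysis.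
From mathcomp Require Import lra.

Import Order.TTheory GRing.Theory Num.Theory.
Import numFieldNormedType.Exports.
Local Open Scope classical_set_scope.
Local Open Scope ring_scope.
Local Open Scope convex_scope.

Lemma ole_OS_inv {a b} : ole (OS a) b -> olt a b.
Proof. by move=> H; inversion H. Qed.

Lemma ole_OL_inv {f b} : ole (OL f) b -> forall n, ole (f n) b.
Proof. by move=> H; inversion H. Qed.

Lemma olt_OZ_inv {a} : ~ olt a OZ.
Proof. by move=> H; inversion H. Qed.

Lemma olt_OS_inv {a b} : olt a (OS b) -> ole a b.
Proof. by move=> H; inversion H. Qed.

Lemma olt_OL_inv {a g} : olt a (OL g) -> exists n, olt a (g n).
Proof. by move=> H; inversion H; exists n. Qed.

Lemma ole_OL n {g : nat -> cord} {a} : ole a (g n) -> ole a (OL g).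
Proof.
elim: a => [|a _|f IH] agn.
- exact: oleZ.
- exact/oleS/(oltL (n := n))/ole_OS_inv.
- by apply: oleL => k; apply: IH; exact: ole_OL_inv agn k.
Qed.

Lemma ole_refl a : ole a a.
Proof.
elim: a => [|a IH|f IH].
- exact: oleZ.
- exact/oleS/oltS.
- by apply: oleL => n; exact: ole_OL (IH n).
Qed.

(* Transitivity is proved by induction on the middle term [b]; the next two
   lemmas pass the induction hypothesis between the [ole] and [olt] forms. *)
Lemma ole_trans_through {b} :
  (forall a c, olt a b -> ole b c -> olt a c) ->
  forall a c, ole a b -> ole b c -> ole a c.
Proof.
move=> ltb; elim=> [|a _|f IH] c ab bc.
- exact: oleZ.
- exact/oleS/(ltb _ _ (ole_OS_inv ab)).
- by apply: oleL => n; exact: IH (ole_OL_inv ab n) bc.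
Qed.

Lemma olt_trans_through {b} :
  (forall a c, ole a b -> ole b c -> ole a c) ->
  forall a c, ole a b -> olt b c -> olt a c.
Proof.
move=> leb a; elim=> [|c _|h IH] ab bc.
- by case: (olt_OZ_inv bc).
- exact/oltS/(leb _ _ ab (olt_OS_inv bc)).
- by have [n bhn] := olt_OL_inv bc; apply: (oltL (n := n)); exact: IH.
Qed.

Lemma olt_ole_trans {b a c} : olt a b -> ole b c -> olt a c.
Proof.
elim: b a c => [|b IH|g IH] a c ab bc.
- by case: (olt_OZ_inv ab).
- exact: olt_trans_through (ole_trans_through IH) _ _ (olt_OS_inv ab) (ole_OS_inv bc).
- by have [n agn] := olt_OL_inv ab; exact: IH n _ _ agn (ole_OL_inv bc n).
Qed.

Lemma ole_trans {b a c} : ole a b -> ole b c -> ole a c.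
Proof. exact: (ole_trans_through (@olt_ole_trans b)). Qed.

Lemma ole_olt_trans {b a c} : ole a b -> olt b c -> olt a c.
Proof. exact: (olt_trans_through (@ole_trans b)). Qed.

Lemma ole_OS a : ole a (OS a).
Proof.
elim: a => [|a IH|f IH].
- exact: oleZ.
- exact/oleS/oltS.
- apply: oleL => n; apply: ole_trans (IH n) _.
  by apply/oleS/oltS/(ole_OL n); exact: ole_refl.
Qed.

Lemma olt_ole {a b} : olt a b -> ole a b.
Proof.
case=> [{}a {}b ab|{}a g n agn]; first exact: ole_trans ab (ole_OS b).
by apply: (ole_OL n); apply: ole_trans (ole_OS a) _; exact: oleS.
Qed.

Lemma olt_irr a : ~ olt a a.
Proof.
elim: a => [|a IH|f IH] aa.
- exact: olt_OZ_inv aa.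
- exact/IH/ole_OS_inv/olt_OS_inv.
- have [n fn] := olt_OL_inv aa; apply: (IH n).
  exact: ole_olt_trans (@ole_OL n f _ (ole_refl _)) fn.
Qed.

Lemma olt_nge {a b} : olt a b -> ~ ole b a.
Proof. by move=> ab ba; apply: (olt_irr a); exact: olt_ole_trans ab ba. Qed.

Lemma oleVgt a b : ole a b \/ olt b a.
Proof.
elim: a b => [|a IH|f IH] b.
- by left; exact: oleZ.
- elim: b => [|b _|g IHg].
  + by right; exact/oltS/oleZ.
  + by case: (IH b) => ab; [left; exact/oleS/oltS | right; exact/oltS/oleS].
  + have [[n agn]|nag] := pselect (exists n, ole (OS a) (g n)).
      by left; exact: @ole_OL n g _ agn.
    right; apply/oltS/oleL => n; case: (IHg n) => [agn|/olt_OS_inv //].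
    by case: nag; exists n.
- have [[n bfn]|nbf] := pselect (exists n, olt b (f n)); first by right; exact: oltL bfn.
  left; apply: oleL => n; case: (IH n b) => // bfn.
  by case: nbf; exists n.
Qed.

Lemma ole_Acc b a : ole a b -> Acc olt a.
Proof.
elim: b a => [|b IH|g IH] a ab; constructor => c ca; have cb := olt_ole_trans ca ab.
- by case: (olt_OZ_inv cb).
- exact/IH/olt_OS_inv.
- by have [n cgn] := olt_OL_inv cb; exact/(IH n)/olt_ole.
Qed.

Lemma olt_wf : well_founded olt.
Proof. by move=> a; exact: ole_Acc (ole_refl a). Qed.

Lemma finite_olt_ub {N} {e : 'I_N -> cord} {b} : olt oone b -> (forall i, olt (e i) b) ->
  exists c, [/\ olt c b, ole oone c & forall i, ole (e i) c].
Proof.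
move=> b1 eb.
suff /(_ N) [c [cb c1 ec]] : forall M, exists c,
    [/\ olt c b, ole oone c & forall i : 'I_N, (i < M)%N -> ole (e i) c].
  by exists c; split => // i; exact: ec.
elim=> [|M [c [cb c1 ec]]]; first by exists oone; split => //; exact: ole_refl.
have [MN|NM] := ltnP M N; last first.
  by exists c; split => // i _; apply: ec; exact: leq_trans (ltn_ord i) NM.
have [eMc|ceM] := oleVgt (e (Ordinal MN)) c.
- exists c; split => // i; rewrite ltnS leq_eqVlt => /orP[/eqP iM|]; last exact: ec.
  by rewrite (_ : i = Ordinal MN) //; exact: val_inj.
- exists (e (Ordinal MN)); split => //; first exact: ole_trans c1 (olt_ole ceM).
  move=> i; rewrite ltnS leq_eqVlt => /orP[/eqP iM|iM].
    by rewrite (_ : i = Ordinal MN); [exact: ole_refl | exact: val_inj].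
  exact: ole_trans (ec i iM) (olt_ole ceM).
Qed.

Section SigmaClass.
Context {T : topologicalType}.

Lemma Sigma_class_open {b} {S : set T} : Sigma_class b S -> ole b oone -> open S.
Proof.
case=> [a A _ _ oA //|a A c cP _ a1].
by have [c1 ca] := cP 0%N; case: (olt_nge ca (ole_trans a1 c1)).
Qed.

Lemma Sigma_class_inv {b} {S : set T} : Sigma_class b S -> olt oone b ->
  exists2 p : (nat -> set T) * (nat -> cord),
    (forall i, [/\ ole oone (p.2 i), olt (p.2 i) b & Sigma_class (p.2 i) (~` p.1 i)])
    & S = \bigcup_i p.1 i.
Proof.
case=> [a A a1 _ _ /olt_nge //|a A c cP AP _].
by exists (A, c) => // i; have [] := cP i.
Qed.

Lemma Pi_Sigma_lt {c b} {A : set T} : ole oone c -> olt c b -> Pi_class c A ->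
  Sigma_class b A.
Proof.
move=> c1 cb Ac; have -> : A = \bigcup_(_ : nat) A by rewrite bigcup_const //; exists 0%N.
exact: (@Sigma_union _ _ (fun=> A) (fun=> c)).
Qed.

(* The pieces of all the [S i] are re-indexed by [pickle (i, n)]; indices
   outside the range of [pickle] get the empty piece. *)
Lemma Sigma_bigcup (I : countType) (A : set I) b (S : I -> set T) : ole oone b ->
  (forall i, A i -> Sigma_class b (S i)) -> Sigma_class b (\bigcup_(i in A) S i).
Proof.
move=> b1 SP; have [b_le1|b_gt1] := oleVgt b oone.
  apply: Sigma_open => //; apply: bigcup_open => i /SP Si.
  exact: Sigma_class_open Si b_le1.
have /choice [p pP] : forall i, exists p : (nat -> set T) * (nat -> cord),
    (forall n, [/\ ole oone (p.2 n), olt (p.2 n) b & Sigma_class (p.2 n) (~` p.1 n)])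
    /\ \bigcup_n p.1 n = if `[< A i >] then S i else set0.
  move=> i; case: asboolP => [Ai|_].
    by have [q qP ->] := Sigma_class_inv (SP i Ai) b_gt1; exists q.
  exists (fun=> set0, fun=> oone); split; last by rewrite bigcup0.
  move=> n; split; [exact: ole_refl | exact: b_gt1 |].
  by rewrite setC0; apply: Sigma_open; [exact: ole_refl | exact: ole_refl | exact: openT].
pose piece m := if unpickle m is Some (i, n) then (p i).1 n else set0.
pose class m := if unpickle m is Some (i, n) then (p i).2 n else oone.
have -> : \bigcup_(i in A) S i = \bigcup_m piece m.
  apply/seteqP; split => t.
    move=> [i Ai]; have [_] := pP i; case: asboolP => // _ <- [n _ pint].
    by exists (pickle (i, n)) => //; rewrite /piece pickleK.
  move=> [m _]; rewrite /piece; case: (unpickle m) => [[i n] pint|//].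
  have [_] := pP i; case: asboolP => [Ai Si|_ pi0]; first by exists i => //; rewrite -Si; exists n.
  suff : set0 t by [].
  by rewrite -pi0; exists n.
apply: (@Sigma_union _ _ piece class) => m; rewrite /piece /class.
  case: (unpickle m) => [[i n]|]; first by have [] := (pP i).1 n.
  by split; [exact: ole_refl | exact: b_gt1].
case: (unpickle m) => [[i n]|]; first by have [] := (pP i).1 n.
by rewrite setC0; apply: Sigma_open; [exact: ole_refl | exact: ole_refl | exact: openT].
Qed.

End SigmaClass.

Lemma Baire_classP {X Y : topologicalType} {a} {f : X -> Y} : Baire_class a f ->
  (ole a OZ /\ continuous f) \/
  exists (g : nat -> X -> Y) (c : nat -> cord), [/\ forall n, olt (c n) a,
    forall n, Baire_class (c n) (g n) & forall x, g n x @[n --> \oo] --> f x].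
Proof. by case=> [a' f' ? ?|a' f' g c ? ? ?]; [left|right; exists g, c]. Qed.

Lemma Baire_class_lim {X Y : topologicalType} {a c} {f : X -> Y} :
  Baire_class a f -> ole a c -> ole oone c ->
  exists (g : nat -> X -> Y) (b : nat -> cord), [/\ forall n, olt (b n) c,
    forall n, Baire_class (b n) (g n) & forall x, g n x @[n --> \oo] --> f x].
Proof.
move=> fa ac c1; case: (Baire_classP fa) => [[_ fcont]|[g [b [ba gb gf]]]].
- exists (fun=> f), (fun=> OZ); split => [n|n|x]; first exact: ole_OS_inv c1.
    exact: Baire_cont (oleZ _) fcont.
  exact: cvg_cst.
- by exists g, b; split => // n; exact: olt_ole_trans (ba n) ac.
Qed.

Lemma natSinv_gt0 (R : numFieldType) (k : nat) : 0 < (k.+1%:R^-1 : R).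
Proof. by rewrite invr_gt0 ltr0Sn. Qed.

Lemma natSinv_le (R : numFieldType) {k j : nat} : (k <= j)%N ->
  (j.+1%:R^-1 : R) <= k.+1%:R^-1.
Proof. by move=> kj; rewrite lef_pV2 ?posrE ?ltr0Sn // ler_nat ltnS. Qed.

Section DistanceTopology.
Context {R : realType} {T : topologicalType} (dT : T -> T -> R).
Hypothesis dT_sym : forall s t, dT s t = dT t s.
Hypothesis dT_tri : forall s t u, dT s u <= dT s t + dT t u.
Hypothesis nbhs_dT : forall t (A : set T),
  nbhs t A <-> exists2 e : R, 0 < e & [set u | dT t u < e] `<=` A.

Lemma cvg_dT_lt {u : nat -> T} {t} : u n @[n --> \oo] --> t ->
  forall e, 0 < e -> exists M, forall n, (M <= n)%N -> dT t (u n) < e.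
Proof.
move=> ut e e0; have /ut [M _ uM] : nbhs t [set v | dT t v < e] by apply/nbhs_dT; exists e.
by exists M => n /uM.
Qed.

Definition ball_interior (O : set T) (r : R) := [set t | forall u, dT t u < r -> O u].

Lemma open_setC_ball_interior O r : open (~` ball_interior O r).
Proof.
rewrite openE => t /existsNP [u /not_implyP [tu Ou]]; apply/nbhs_dT.
exists (r - dT t u); first by rewrite subr_gt0.
move=> s /= st sO; apply/Ou/sO.
by have := dT_tri s t u; rewrite (dT_sym s t); lra.
Qed.

Lemma open_cvg_ball_interior {O : set T} {u : nat -> T} {t} : open O ->
  u n @[n --> \oo] --> t ->
  O t <-> exists k m, forall n, (m <= n)%N -> ball_interior O k.+1%:R^-1 (u n).
Proof.
move=> oO ut; split => [Ot|[k [m ukm]]].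
- have /nbhs_dT [e e0 eO] : nbhs t O by exact: open_nbhs_nbhs.
  have [k /[!add0r] ke] : exists k, 0 + k.+1%:R^-1 < e / 2.
    by apply: ltr_add_invr; rewrite divr_gt0.
  have [M uM] := cvg_dT_lt ut _ (natSinv_gt0 R k).
  exists k, M => n Mn v uv; apply: eO.
  apply: le_lt_trans (dT_tri t (u n) v) _.
  by have := uM n Mn; move: ke uv; set w := k.+1%:R^-1; lra.
- have [M uM] := cvg_dT_lt ut _ (natSinv_gt0 R k).
  by apply: (ukm (maxn m M) (leq_maxl _ _)); rewrite dT_sym; apply: uM; exact: leq_maxr.
Qed.

End DistanceTopology.

Section BairePreimage.
Context {R : realType} {X W Y T : topologicalType} {dT : T -> T -> R}.
Hypothesis dT_sym : forall s t, dT s t = dT t s.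
Hypothesis dT_tri : forall s t u, dT s u <= dT s t + dT t u.
Hypothesis nbhs_dT : forall t (A : set T),
  nbhs t A <-> exists2 e : R, 0 < e & [set u | dT t u < e] `<=` A.
Context {N : nat} {Phi : ('I_N -> Y) -> W -> T}.
Hypothesis Phi_continuous : forall H : 'I_N -> X -> Y, (forall i, continuous (H i)) ->
  continuous (fun p : X * W => Phi (fun i => H i p.1) p.2).
Hypothesis Phi_cvg : forall (Hn : nat -> 'I_N -> Y) (H : 'I_N -> Y) w,
  (forall i, Hn n i @[n --> \oo] --> H i) -> Phi (Hn n) w @[n --> \oo] --> Phi H w.

Lemma Sigma_preimage_Baire b (H : 'I_N -> X -> Y) (e : 'I_N -> cord) (O : set T) :
  ole oone b -> (forall i, olt (e i) b) -> (forall i, Baire_class (e i) (H i)) ->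
  open O -> Sigma_class b [set p : X * W | O (Phi (fun i => H i p.1) p.2)].
Proof.
elim/(well_founded_ind olt_wf): b H e O => b IH H e O b1 eb He oO.
have [b_le1|b_gt1] := oleVgt b oone.
  have Hcont i : continuous (H i).
    case: (Baire_classP (He i)) => [[] //|[g [c [ce _ _]]]].
    have /olt_OS_inv ei0 := olt_ole_trans (eb i) b_le1.
    by case: (olt_OZ_inv (olt_ole_trans (ce 0%N) ei0)).
  apply: Sigma_open => //; apply: open_comp oO => p _.
  exact: Phi_continuous Hcont p.
have [c [cb c1 ec]] := finite_olt_ub b_gt1 eb.
have /choice [q qP] : forall i, exists q : (nat -> X -> Y) * (nat -> cord),
    [/\ forall n, olt (q.2 n) c, forall n, Baire_class (q.2 n) (q.1 n)
      & forall x, q.1 n x @[n --> \oo] --> H i x].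
  by move=> i; have [g [cs gP]] := Baire_class_lim (He i) (ec i) c1; exists (g, cs).
have PhiH p : Phi (fun i => (q i).1 n p.1) p.2 @[n --> \oo] -->
    Phi (fun i => H i p.1) p.2.
  by apply: Phi_cvg => i; have [_ _] := qP i; apply.
pose C k := ball_interior dT O k.+1%:R^-1.
have -> : [set p | O (Phi (fun i => H i p.1) p.2)] = \bigcup_(km : nat * nat)
    [set p | forall n, (km.2 <= n)%N -> C km.1 (Phi (fun i => (q i).1 n p.1) p.2)].
  apply/seteqP; split => p /=.
    by move=> /(open_cvg_ball_interior _ dT_sym dT_tri nbhs_dT oO (PhiH p)) [k [m km]];
      exists (k, m).
  move=> [[k m] _ km].
  by apply/(open_cvg_ball_interior _ dT_sym dT_tri nbhs_dT oO (PhiH p)); exists k, m.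
apply: Sigma_bigcup => // -[k m] _; apply: (Pi_Sigma_lt c1 cb); rewrite /Pi_class /=.
have -> : ~` [set p | forall n, (m <= n)%N -> C k (Phi (fun i => (q i).1 n p.1) p.2)] =
    \bigcup_n [set p | (~` C k) (Phi (fun i => (q i).1 (m + n)%N p.1) p.2)].
  apply/seteqP; split => p /=.
    by move=> /existsNP [n /not_implyP [mn nC]]; exists (n - m)%N => //=; rewrite subnKC.
  by move=> [n _ /= nC] allC; apply: nC; apply: allC; exact: leq_addr.
apply: Sigma_bigcup => // n _; apply: (IH c cb (fun i => (q i).1 (m + n)%N) (fun i => (q i).2 (m + n)%N)) => //.
- by move=> i; have [] := qP i.
- by move=> i; have [] := qP i.
- exact: open_setC_ball_interior.
Qed.

End BairePreimage.

Section GraphApproximation.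
Context {R : realType} {X Y : Type} (d : Y -> Y -> R).
Hypothesis d_ge0 : forall a b, 0 <= d a b.
Hypothesis d_eq0 : forall a b, d a b = 0 -> a = b.
Hypothesis d_xx : forall a, d a a = 0.
Hypothesis d_sym : forall a b, d a b = d b a.
Hypothesis d_tri : forall a b c, d a c <= d a b + d b c.

Lemma diam_le_radius (S : set Y) y0 (e : R) : S y0 ->
  (forall y, S y -> d y0 y <= e) -> exists2 r, diam d S = r%:E & 0 <= r <= e + e.
Proof.
move=> Sy0 Se; have : (0 <= diam d S <= (e + e)%:E)%E.
  apply/andP; split.
    rewrite (_ : 0%E = (d y0 y0)%:E); last by rewrite d_xx.
    by apply: ereal_sup_ubound; exists y0 => //; exists y0.
  apply: ge_ereal_sup => _ [a Sa [b Sb <-]]; rewrite lee_fin.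
  by apply: le_trans (d_tri a y0 b) _; rewrite d_sym; apply: lerD; exact: Se.
case: (diam d S) => [r| |] /andP[D0 De].
- by exists r => //; rewrite -!lee_fin D0.
- by move: De; rewrite leye_eq.
- by move: D0; rewrite leeNy_eq.
Qed.

Lemma bigcap_graph_diam_cvg0 {f : X -> Y} {G : nat -> set (X * Y)} :
  (forall j x, G j (x, f x)) ->
  (forall x e, 0 < e -> exists J, forall j, (J <= j)%N -> forall y,
     G j (x, y) -> d (f x) y < e) ->
  \bigcap_n G n = graph_of f /\
  (forall x, (fun n => diam d (section_at (G n) x)) @ \oo --> 0%E).
Proof.
move=> Gf Gnear; split.
  apply/seteqP; split => -[x y] /=; last by rewrite /graph_of /= => -> n _; exact: Gf.
  move=> Gxy; rewrite /graph_of /=; apply/esym/d_eq0.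
  have [//|d_neq0] := eqVneq (d (f x) y) 0.
  have d_gt0 : 0 < d (f x) y by rewrite lt_neqAle eq_sym d_neq0 d_ge0.
  have [J JP] := Gnear x _ d_gt0.
  by have := JP J (leqnn J) y (Gxy J I); rewrite ltxx.
move=> x; have diamP e : 0 < e -> \forall j \near \oo,
    exists2 r, diam d (section_at (G j) x) = r%:E & 0 <= r <= e + e.
  move=> e0; have [J JP] := Gnear x e e0; exists J => // j /= Jj.
  by apply: diam_le_radius (Gf j x) _ => y /(JP j Jj y) /ltW.
apply/fine_cvgP; split.
  by move: (diamP 1 ltr01); apply: filterS => j [r -> _].
apply/cvgrPdist_lt => e e0; have /diamP : 0 < e / 4 by rewrite divr_gt0.
apply: filterS => j [r Dr /andP[r0 re]] /=; rewrite Dr /=.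
by rewrite sub0r normrN ger0_norm //; lra.
Qed.

End GraphApproximation.

Lemma nbhs_normr_lt {R : realType} (t : R) (A : set R) :
  nbhs t A <-> exists2 e : R, 0 < e & [set u | `|t - u| < e] `<=` A.
Proof.
split => [/nbhs_ballP [e e0 eA]|[e e0 eA]].
  by exists e => // u tu; apply: eA; rewrite -ball_normE.
by apply/nbhs_ballP; exists e => // u; rewrite -ball_normE => /eA.
Qed.

Section MetricCase.
Context {R : realType} {Y : metricType R}.

Lemma nbhs_mdist_lt (t : Y) (A : set Y) :
  nbhs t A <-> exists2 e : R, 0 < e & [set u | mdist t u < e] `<=` A.
Proof.
rewrite -metricType_numDomainType.filter_from_mdist_nbhs.
by split => -[e e0 eA]; exists e.
Qed.

Lemma mdist_continuous : continuous (fun q : Y * Y => mdist q.1 q.2).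
Proof.
move=> [a b]; apply/cvgrPdist_lt => e e0.
have e2 : 0 < e / 2 by rewrite divr_gt0.
exists ([set z | mdist a z < e / 2], [set z | mdist b z < e / 2]).
  by split => /=; apply/nbhs_mdist_lt; exists (e / 2).
move=> [y1 y2] [/= ay1 by2].
have := metric_triangle y1 a y2; have := metric_triangle a b y2.
have := metric_triangle a y1 b; have := metric_triangle y1 y2 b.
rewrite (metric_sym y1 a) (metric_sym y2 b) ltr_norml => *; apply/andP; split; lra.
Qed.

Lemma Baire_graph_Sigma_metric {X : topologicalType} {a} {f : X -> Y} :
  ole oone a -> Baire_class a f ->
  exists G : nat -> set (X * Y),
    [/\ forall n, Sigma_class a (G n), \bigcap_n G n = graph_of f &
      forall x, (fun n => diam mdist (section_at (G n) x)) @ \oo --> 0%E].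
Proof.
move=> a1 fa; have [g [c [ca gc gf]]] := Baire_class_lim fa (ole_refl a) a1.
have gf_lt x := cvg_dT_lt _ nbhs_mdist_lt (gf x).
pose G j := \bigcup_n [set p : X * Y | mdist (g (j + n)%N p.1) p.2 < j.+1%:R^-1].
have graphG j x : G j (x, f x).
  have [M gM] := gf_lt x _ (natSinv_gt0 R j).
  by exists M => //=; rewrite metric_sym; apply: gM; exact: leq_addl.
have nearG x e : 0 < e -> exists J, forall j, (J <= j)%N -> forall y,
    G j (x, y) -> mdist (f x) y < e.
  move=> e0; have e2 : 0 < e / 2 by rewrite divr_gt0.
  have [k /[!add0r] ke] : exists k, 0 + k.+1%:R^-1 < e / 2 by exact: ltr_add_invr.
  have [M gM] := gf_lt x _ e2.
  exists (maxn k M) => j kMj y [n _ /= gy].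
  have := gM (j + n)%N (leq_trans (leq_maxr k M) (leq_trans kMj (leq_addr n j))).
  have := natSinv_le R (leq_trans (leq_maxl k M) kMj).
  have := metric_triangle (f x) (g (j + n)%N x) y.
  by move: ke gy; set r := k.+1%:R^-1; set r' := j.+1%:R^-1; lra.
have [capG diamG] := bigcap_graph_diam_cvg0 mdist (@mdist_ge0 _ _) (@mdist_positivity _ _)
  (@mdistxx _ _) (@metric_sym _ _) (@metric_triangle _ _) graphG nearG.
exists G; split => // j; apply: Sigma_bigcup => // n _.
have Phi_continuous (H : 'I_1 -> X -> Y) : (forall i, continuous (H i)) ->
    continuous (fun p : X * Y => mdist (H ord0 p.1) p.2).
  move=> Hc p; apply: (@continuous_comp _ _ _ (fun p => (H ord0 p.1, p.2))
    (fun q => mdist q.1 q.2)); last exact: mdist_continuous.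
  by apply: cvg_pair cvg_snd; apply: continuous_comp cvg_fst (Hc ord0 p.1).
have Phi_cvg (Hn : nat -> 'I_1 -> Y) (H : 'I_1 -> Y) w :
    (forall i, Hn n i @[n --> \oo] --> H i) ->
    mdist (Hn n ord0) w @[n --> \oo] --> mdist (H ord0) w.
  move=> HnH.
  exact: cvg_comp _ _ (cvg_pair (HnH ord0) (cvg_cst w)) (mdist_continuous (H ord0, w)).
exact: (Sigma_preimage_Baire (fun s t => distrC s t) (fun s t u => ler_distD t s u)
  nbhs_normr_lt Phi_continuous Phi_cvg a (fun=> g (j + n)%N) (fun=> c (j + n)%N) _
  a1 (fun=> ca _) (fun=> gc _) (@open_lt R j.+1%:R^-1)).
Qed.

End MetricCase.

Section TvsLimits.
Context {R : realType} {Y : tvsType R} {T : Type} {F : set_system T} {FF : Filter F}.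

Lemma tvs_cvgD (f g : T -> Y) (a b : Y) : f t @[t --> F] --> a -> g t @[t --> F] --> b ->
  f t + g t @[t --> F] --> a + b.
Proof. by move=> fa gb; exact: cvg_comp _ _ (cvg_pair fa gb) (@add_continuous Y (a, b)). Qed.

Lemma tvs_cvgB (f g : T -> Y) (a b : Y) : f t @[t --> F] --> a -> g t @[t --> F] --> b ->
  f t - g t @[t --> F] --> a - b.
Proof. by move=> fa gb; exact: cvg_comp _ _ (cvg_pair fa gb) (@sub_continuous Y (a, b)). Qed.

Lemma tvs_cvgZ (s : T -> R) (f : T -> Y) (k : R) (a : Y) : s t @[t --> F] --> k ->
  f t @[t --> F] --> a -> s t *: f t @[t --> F] --> k *: a.
Proof.
move=> sk fa.
exact: cvg_comp _ _ (@cvg_pair _ _ _ _ (nbhs (k : R^o)) _ _ _ _ _ _ sk fa)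
  (@scale_continuous R Y (k, a)).
Qed.

Lemma tvs_cvg_sum {I : Type} (r : seq I) (w : I -> R) (f : I -> T -> Y) (l : I -> Y) :
  (forall i, f i t @[t --> F] --> l i) ->
  \sum_(i <- r) w i *: f i t @[t --> F] --> \sum_(i <- r) w i *: l i.
Proof.
move=> fl; elim: r => [|i r IH].
  by rewrite big_nil; under eq_fun do rewrite big_nil; exact: cvg_cst.
rewrite big_cons; under eq_fun do rewrite big_cons.
by apply: tvs_cvgD IH; apply: tvs_cvgZ (fl i); exact: cvg_cst.
Qed.

End TvsLimits.

Lemma open_convex_nbhs {R : realType} {Y : tvsType R} (y : Y) (A : set Y) : nbhs y A ->
  exists V : set Y, [/\ open V, V y, convex_set (V : set (convex_lmodType Y)) & V `<=` A].
Proof.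
have [B Bconvex [Bopen Bbasis]] := @locally_convex R Y.
move=> /Bbasis [V [BV Vy] VA]; exists V; split => //; first exact: Bopen.
by apply: Bconvex; rewrite inE.
Qed.

Lemma convex_set_comb {R : numFieldType} {Y : lmodType R} (V : set Y) {I : eqType}
    (r : seq I) (w : I -> R) (v : I -> Y) :
  convex_set (V : set (convex_lmodType Y)) ->
  (forall i, i \in r -> 0 <= w i) -> \sum_(i <- r) w i = 1 ->
  (forall i, i \in r -> V (v i)) -> V (\sum_(i <- r) w i *: v i).
Proof.
move=> Vconvex; elim: r w => [|i r IH] w w0 w1 vV.
  by move: w1; rewrite big_nil => /eqP; rewrite eq_sym oner_eq0.
have w0r j : j \in r -> 0 <= w j by move=> jr; apply: w0; rewrite inE jr orbT.
have vVr j : j \in r -> V (v j) by move=> jr; apply: vV; rewrite inE jr orbT.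
have Vvi : V (v i) by apply: vV; rewrite inE eqxx.
move: w1; rewrite !big_cons; set t := \sum_(j <- r) w j => wit.
have t0 : 0 <= t by rewrite /t big_seq sumr_ge0.
have wiE : w i = 1 - t by rewrite -wit addrK.
have [t_eq0|t_neq0] := eqVneq t 0.
  have wj0 j : j \in r -> w j = 0.
    move=> jr; move/eqP: t_eq0; rewrite /t big_seq psumr_eq0 // => /allP /(_ j jr).
    by rewrite jr => /eqP.
  rewrite big_seq big1 => [|j /wj0 ->]; last by rewrite scale0r.
  by rewrite addr0 wiE t_eq0 subr0 scale1r.
have t_gt0 : 0 < t by rewrite lt_neqAle eq_sym t_neq0 t0.
set z := \sum_(j <- r) (w j / t) *: v j.
have Vz : V z.
  apply: IH => [j jr||//]; first by rewrite divr_ge0 // w0r.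
  by rewrite -mulr_suml divff.
have -> : \sum_(j <- r) w j *: v j = t *: z.
  rewrite scaler_sumr; apply: eq_bigr => j _.
  by rewrite scalerA mulrCA divff ?mulr1.
have wi0 : 0 <= w i by apply: w0; rewrite inE eqxx.
have wi1 : w i <= 1 by rewrite wiE lerBlDr lerDl.
have := Vconvex (v i) z (Itv01 wi0 wi1); rewrite !inE => /(_ Vvi Vz).
suff -> : w i *: v i + t *: z = (v i : convex_lmodType Y) <| Itv01 wi0 wi1 |> z by [].
change (w i *: v i + t *: z = w i *: v i + (1 - w i) *: z).
by rewrite wiE subKr.
Qed.

Definition rat_weights : set (seq (rat * nat)) :=
  [set s | (forall p, p \in s -> 0 <= p.1) /\ \sum_(p <- s) p.1 = 1].

Definition rat_comb {R : numFieldType} {Y : lmodType R} (u : nat -> Y)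
    (s : seq (rat * nat)) : Y :=
  \sum_(p <- s) ratr p.1 *: u p.2.

Definition rat_mix (q : rat) (s1 s2 : seq (rat * nat)) : seq (rat * nat) :=
  [seq (q * p.1, p.2) | p <- s1] ++ [seq ((1 - q) * p.1, p.2) | p <- s2].

Lemma rat_weights1 n : rat_weights [:: (1, n)].
Proof. by split => [p|]; [rewrite inE => /eqP -> | rewrite big_seq1]. Qed.

Lemma rat_weights_mix q s1 s2 : 0 <= q <= 1 ->
  rat_weights s1 -> rat_weights s2 -> rat_weights (rat_mix q s1 s2).
Proof.
move=> /andP[q0 q1] [s1_ge0 s1_sum] [s2_ge0 s2_sum]; split.
  move=> p; rewrite mem_cat => /orP[] /mapP[p' p's ->] /=.
    by rewrite mulr_ge0 // s1_ge0.
  by rewrite mulr_ge0 ?subr_ge0 // s2_ge0.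
by rewrite big_cat !big_map /= -!mulr_sumr s1_sum s2_sum !mulr1 addrC subrK.
Qed.

Section RationalCombinations.
Context {R : numFieldType} {Y : lmodType R}.
Implicit Types (u : nat -> Y) (s : seq (rat * nat)).

Lemma rat_weights_ratr s : rat_weights s ->
  (forall p, p \in s -> 0 <= ratr p.1 :> R) /\ \sum_(p <- s) ratr p.1 = 1 :> R.
Proof.
move=> [s_ge0 s_sum]; split => [p /s_ge0|]; first by rewrite ler0q.
by rewrite -rmorph_sum s_sum rmorph1.
Qed.

Lemma rat_comb1 u n : rat_comb u [:: (1, n)] = u n.
Proof. by rewrite /rat_comb big_seq1 /= rmorph1 scale1r. Qed.

Lemma rat_comb_mix u q s1 s2 : rat_comb u (rat_mix q s1 s2) =
  ratr q *: rat_comb u s1 + (1 - ratr q) *: rat_comb u s2.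
Proof.
rewrite /rat_comb big_cat !big_map !scaler_sumr /=.
by congr (_ + _); apply: eq_bigr => p _; rewrite rmorphM ?rmorphB ?rmorph1 scalerA.
Qed.

Lemma rat_combBr u s y : rat_weights s ->
  rat_comb u s - y = rat_comb (fun n => u n - y) s.
Proof.
move=> /rat_weights_ratr [_ s_sum]; rewrite /rat_comb.
under [RHS]eq_bigr do rewrite scalerBr.
by rewrite sumrB -scaler_suml s_sum scale1r.
Qed.

Lemma convex_rat_comb (C : set Y) u s : convex_set (C : set (convex_lmodType Y)) ->
  rat_weights s -> (forall p, p \in s -> C (u p.2)) -> C (rat_comb u s).
Proof. by move=> Cconvex /rat_weights_ratr [s_ge0 s_sum] sC; exact: convex_set_comb. Qed.

End RationalCombinations.

Lemma open_rat_mix {R : realType} {Y : tvsType R} {V : set Y} {y1 y2 k1 k2 : Y} {l : R} :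
  open V -> 0 <= l <= 1 -> V (l *: (y1 - k1) + (1 - l) *: (y2 - k2)) ->
  exists2 q : rat, 0 <= q <= 1 &
    V (l *: y1 + (1 - l) *: y2 - (ratr q *: k1 + (1 - ratr q) *: k2)).
Proof.
move=> Vopen /andP[l0 l1] Vl.
pose h (tau : R) := l *: y1 + (1 - l) *: y2 - (tau *: k1 + (1 - tau) *: k2).
have hl : h l = l *: (y1 - k1) + (1 - l) *: (y2 - k2).
  by rewrite /h !scalerBr opprD addrACA.
have h_cvg : h tau @[tau --> l] --> h l.
  apply: tvs_cvgB; first exact: cvg_cst.
  apply: tvs_cvgD; apply: tvs_cvgZ; try exact: cvg_cst; first exact: cvg_id.
  by apply: cvgB; [exact: cvg_cst | exact: cvg_id].
have /h_cvg /nbhs_normr_lt [delta delta0 deltaV] : nbhs (h l) V.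
  by apply: open_nbhs_nbhs; split; rewrite ?hl.
have [eps [eps0 eps1 eps_delta]] : exists eps : R, [/\ 0 < eps, eps <= 1 & eps <= delta].
  by case: (lerP delta 1) => d1; [exists delta | exists 1; split => //; exact: ltW].
(* an interval of length [eps] inside [0, 1], at distance less than [eps] from [l] *)
have [q] : exists q : rat, ratr q \in `](1 - eps) * l, (1 - eps) * l + eps[.
  by apply: rat_in_itvoo; rewrite ltrDl.
rewrite in_itv /= => /andP[q_gt q_lt].
exists q; last by apply: deltaV => /=; rewrite ltr_norml; apply/andP; split; nra.
by rewrite -(ler0q R) -(ler_rat R) rmorph1; apply/andP; split; nra.
Qed.

Definition strip {R : numFieldType} {X : Type} {Y : lmodType R} (g : nat -> X -> Y)
    (V : nat -> set Y) (j : nat) : set (X * Y) :=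
  \bigcup_(s in rat_weights) [set p | V j (p.2 - rat_comb (fun n => g (j + n)%N p.1) s)].

Section FrechetStrips.
Context {R : realType} {X : topologicalType} {Y : tvsType R} {d : Y -> Y -> R}.
Hypothesis d_ge0 : forall u v, 0 <= d u v.
Hypothesis d_eq0 : forall u v, d u v = 0 <-> u = v.
Hypothesis d_sym : forall u v, d u v = d v u.
Hypothesis d_tri : forall u v w, d u w <= d u v + d v w.
Hypothesis d_translate : forall u v w, d (u + w) (v + w) = d u v.
Hypothesis nbhs_d : forall (y : Y) (A : set Y),
  nbhs y A <-> exists2 e : R, 0 < e & [set z | d y z < e] `<=` A.

Let d_xx u : d u u = 0. Proof. exact/d_eq0. Qed.

Let d_sub u v : d u v = d 0 (v - u).
Proof. by rewrite -(d_translate u v (- u)) subrr. Qed.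

Let d0_add u v : d 0 (u + v) <= d 0 u + d 0 v.
Proof. by apply: le_trans (d_tri 0 u (u + v)) _; rewrite (d_sub u) addrAC subrr add0r. Qed.

Section Strips.
Context {a : cord} {g : nat -> X -> Y} {c : nat -> cord} {f : X -> Y}.
Hypothesis a_ge1 : ole oone a.
Hypothesis c_lt : forall n, olt (c n) a.
Hypothesis g_Baire : forall n, Baire_class (c n) (g n).
Hypothesis g_cvg : forall x, g n x @[n --> \oo] --> f x.

Context {V : nat -> set Y}.
Hypothesis V_open : forall j, open (V j).
Hypothesis V0 : forall j, V j 0.
Hypothesis V_convex : forall j, convex_set (V j : set (convex_lmodType Y)).
Hypothesis V_small : forall j, V j `<=` [set w | d 0 w < j.+1%:R^-1].

Let g_cvg_lt x := cvg_dT_lt d nbhs_d (g_cvg x).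

Lemma strip_graph j x : strip g V j (x, f x).
Proof.
have /nbhs_d [e e0 eV] : nbhs (0 : Y) (V j) by exact: open_nbhs_nbhs (conj (V_open j) (V0 j)).
have [M gM] := g_cvg_lt x _ e0.
exists [:: (1, M)]; first exact: rat_weights1.
by apply: eV; rewrite /= rat_comb1 -d_sub d_sym; apply: gM; exact: leq_addl.
Qed.

Lemma strip_near_graph x e : 0 < e -> exists J, forall j, (J <= j)%N ->
  forall y, strip g V j (x, y) -> d (f x) y < e.
Proof.
move=> e0; have e2 : 0 < e / 2 by rewrite divr_gt0.
have [U [Uopen U0 Uconvex Usmall]] : exists U : set Y, [/\ open U, U 0,
    convex_set (U : set (convex_lmodType Y)) & U `<=` [set w | d 0 w < e / 2]].
  by apply: open_convex_nbhs; apply/nbhs_d; exists (e / 2).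
have /nbhs_d [e' e'0 e'U] : nbhs (0 : Y) U by exact: open_nbhs_nbhs.
have [M gM] := g_cvg_lt x _ e'0.
have [k /[!add0r] ke] : exists k, 0 + k.+1%:R^-1 < e / 2 by exact: ltr_add_invr.
exists (maxn k M) => j kMj y [s sw /= Vy].
(* [y - f x] splits into a point of [V j] and a convex combination of the
   [g n x - f x], [n >= M], which lies in the convex set [U] *)
have Ucomb : U (rat_comb (fun n => g (j + n)%N x) s - f x).
  rewrite rat_combBr //; apply: convex_rat_comb => // p _.
  apply: e'U; rewrite /= -d_sub; apply: gM.
  exact: leq_trans (leq_maxr k M) (leq_trans kMj (leq_addr _ _)).
have := d0_add (y - rat_comb (fun n => g (j + n)%N x) s)
  (rat_comb (fun n => g (j + n)%N x) s - f x).
rewrite addrA subrK -d_sub.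
have := V_small _ _ Vy; have := Usmall _ Ucomb.
have := natSinv_le R (leq_trans (leq_maxl k M) kMj).
by move: ke; set r := k.+1%:R^-1; set r' := j.+1%:R^-1; rewrite /=; lra.
Qed.

Lemma strip_convex j x : convex_set (section_at (strip g V j) x : set (convex_lmodType Y)).
Proof.
move=> y1 y2 l; rewrite !inE /section_at /= => -[s1 s1w V1] [s2 s2w V2].
set u := fun n => g (j + n)%N x in V1 V2 *.
have := V_convex j (y1 - rat_comb u s1) (y2 - rat_comb u s2) l.
rewrite !inE => /(_ V1 V2) Vl.
have l01 : 0 <= l%:num <= 1 by rewrite ge0 le1.
have [q q01 Vq] := open_rat_mix (V_open j) l01 Vl.
by exists (rat_mix q s1 s2); [exact: rat_weights_mix | rewrite /= rat_comb_mix].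
Qed.

Lemma strip_Sigma j : Sigma_class a (strip g V j).
Proof.
apply: Sigma_bigcup => // s _.
pose p0 : rat * nat := (0, 0%N).
pose w i := (ratr (nth p0 s i).1 : R).
pose Phi (z : 'I_(size s) -> Y) (y : Y) := y - \sum_(i < size s) w i *: z i.
have -> : [set p | V j (p.2 - rat_comb (fun n => g (j + n)%N p.1) s)] =
    [set p | V j (Phi (fun i => g (j + (nth p0 s i).2)%N p.1) p.2)].
  by apply/seteqP; split => p; rewrite /= /rat_comb (big_nth p0) big_mkord.
have Phi_continuous (H : 'I_(size s) -> X -> Y) : (forall i, continuous (H i)) ->
    continuous (fun p : X * Y => Phi (fun i => H i p.1) p.2).
  move=> Hc p; apply: tvs_cvgB cvg_snd _; apply: tvs_cvg_sum => i.
  exact: continuous_comp cvg_fst (Hc i p.1).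
have Phi_cvg (Hn : nat -> 'I_(size s) -> Y) (H : 'I_(size s) -> Y) y :
    (forall i, Hn n i @[n --> \oo] --> H i) -> Phi (Hn n) y @[n --> \oo] --> Phi H y.
  by move=> HnH; apply: tvs_cvgB (cvg_cst y) _; exact: tvs_cvg_sum.
exact: (Sigma_preimage_Baire d_sym d_tri nbhs_d Phi_continuous Phi_cvg a _ _ _
  a_ge1 (fun=> c_lt _) (fun=> g_Baire _) (V_open j)).
Qed.

End Strips.

Lemma Baire_graph_Sigma_strip {a} {f : X -> Y} : ole oone a -> Baire_class a f ->
  exists G : nat -> set (X * Y),
    [/\ forall n, Sigma_strip a (G n), \bigcap_n G n = graph_of f &
      forall x, (fun n => diam d (section_at (G n) x)) @ \oo --> 0%E].
Proof.
move=> a1 fa; have [g [c [ca gc gf]]] := Baire_class_lim fa (ole_refl a) a1.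
have /choice [V VP] : forall j, exists V : set Y, [/\ open V, V 0,
    convex_set (V : set (convex_lmodType Y)) & V `<=` [set w | d 0 w < j.+1%:R^-1]].
  by move=> j; apply: open_convex_nbhs; apply/nbhs_d; exists j.+1%:R^-1 => //; exact: natSinv_gt0.
have V_open j : open (V j) by have [] := VP j.
have V0 j : V j 0 by have [] := VP j.
have V_convex j : convex_set (V j : set (convex_lmodType Y)) by have [] := VP j.
have V_small j : V j `<=` [set w | d 0 w < j.+1%:R^-1] by have [] := VP j.
have [capG diamG] := bigcap_graph_diam_cvg0 d d_ge0 (fun u v => proj1 (d_eq0 u v)) d_xx
  d_sym d_tri (strip_graph gf V_open V0) (strip_near_graph gf V_small).
exists (strip g V); split => // j.
split; first exact (strip_Sigma a1 ca gc V_open j).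
exact (strip_convex V_open V_convex j).
Qed.

End FrechetStrips.

Theorem theorem1p6 (R : realType) (X : topologicalType) (a : cord) :
  ole oone a ->
  (forall (Y : metricType R) (f : X -> Y), Baire_class a f ->
    exists G : nat -> set (X * Y),
      (forall n, Sigma_class a (G n)) /\
      \bigcap_n G n = graph_of f /\
      (forall x, (fun n => diam mdist (section_at (G n) x)) @ \oo --> 0%E)) /\
  (forall (Y : tvsType R) (d : Y -> Y -> R) (f : X -> Y),
    frechet_metric d -> Baire_class a f ->
    exists G : nat -> set (X * Y),
      (forall n, Sigma_strip a (G n)) /\
      \bigcap_n G n = graph_of f /\
      (forall x, (fun n => diam d (section_at (G n) x)) @ \oo --> 0%E)).
Proof.
move=> a1; split => [Y f fa|Y d f [d_ge0 [d_eq0 [d_sym [d_tri [d_translate [nbhs_d _]]]]]] fa].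
  by have [G [GSigma capG diamG]] := Baire_graph_Sigma_metric a1 fa; exists G.
have [G [Gstrip capG diamG]] := Baire_graph_Sigma_strip d_ge0 d_eq0 d_sym d_tri
  d_translate nbhs_d a1 fa.
by exists G.
Qed.
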